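(* Let $k\in\mathbb Z$ and let $(p_l)_{l\le k}$ be a probability distribution on $\{l\in\mathbb Z:l\le k\}$ with $p_k\in(0,1)$, $p_kp_{k-1}>0$, and $\sum_{l\le k}|l|p_l<\infty$. Let $r_i=\sum_{j\le k-i}p_j$ for $i\ge1$. Then, as $N\to\infty$, $$\sum_{i=2}^\infty\Big(\frac{r_i}{r_1}\Big)^N=O\Big(\Big(\frac{r_2}{r_1}\Big)^N\Big).$$ *)

From Stdlib Require Export Reals ZArith.
From Coquelicot Require Export Coquelicot.
Open Scope R_scope.

(* A distribution p on {l in Z | l <= k} is given as p : Z -> R; only its
   values at l <= k matter.  Sums over l <= k are written as series over
   m : nat with l = k - m. *)

Definition r (p : Z -> R) (k : Z) (i : nat) : R :=
  Series (fun m : nat => p (k - Z.of_nat i - Z.of_nat m)%Z).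

(* The tails r_i are non-increasing, and the finite first moment gives the
   Markov bound i r_i <= M.  Hence x_j := r_(j+2)/r_1 satisfies
   0 <= x_j <= r_2/r_1 =: q and x_j <= c/(j+2) with c := M/r_1, so x_j^2 is dominated by the
   telescoping series c^2 (1/(j+1) - 1/(j+2)), and
   sum_j x_j^N <= q^(N-2) sum_j x_j^2 = O(q^N). *)

From Stdlib Require Import Lra Lia Psatz.
Open Scope R_scope.

Lemma ex_series_le_nonneg (a b : nat -> R) :
  (forall n, 0 <= a n <= b n) -> ex_series b -> ex_series a.
Proof.
  intros Hab Hb.
  apply (@ex_series_le R_AbsRing R_CompleteNormedModule _ b); [|exact Hb].
  intro n; unfold norm; simpl; unfold abs; simpl.
  rewrite Rabs_pos_eq; apply Hab.
Qed.

Lemma Series_zero : Series (fun _ : nat => 0) = 0.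
Proof.
  rewrite (Series_ext _ (fun _ : nat => 0 * 0)) by (intro; ring).
  rewrite Series_scal_l; ring.
Qed.

Lemma Series_ge0 (a : nat -> R) :
  (forall n, 0 <= a n) -> ex_series a -> 0 <= Series a.
Proof.
  intros Ha Hea; rewrite <- Series_zero.
  apply Series_le; [|exact Hea].
  intro n; split; [lra | apply Ha].
Qed.

Lemma is_series_telescope (u : nat -> R) (l : R) :
  is_lim_seq u l -> is_series (fun n => u n - u (S n)) (u O - l).
Proof.
  intro Hu.
  assert (Hsum : forall n, sum_n (fun n => u n - u (S n)) n = u O - u (S n)).
  { induction n as [|n IH]; [now rewrite sum_O|].
    rewrite sum_Sn, IH; unfold plus; simpl; ring. }
  change (is_lim_seq (sum_n (fun n => u n - u (S n))) (u O - l)).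
  apply (is_lim_seq_ext (fun n => u O - u (S n))); [intro n; now rewrite Hsum|].
  apply (is_lim_seq_minus' _ _ (u O) l); [apply is_lim_seq_const|].
  now apply is_lim_seq_incr_1 in Hu.
Qed.

Lemma ex_series_inv_INR_diff :
  ex_series (fun j : nat => / INR (j + 1) - / INR (j + 2)).
Proof.
  assert (Hlim : is_lim_seq (fun n : nat => / INR (n + 1)) 0).
  { replace (Finite 0) with (Rbar_inv p_infty) by reflexivity.
    apply is_lim_seq_inv; [|discriminate].
    apply (is_lim_seq_incr_n INR 1 p_infty), is_lim_seq_INR. }
  eexists; apply (is_series_ext (fun n => / INR (n + 1) - / INR (S n + 1))).
  - intro n; do 3 f_equal; lia.
  - exact (is_series_telescope _ _ Hlim).
Qed.

Lemma sq_le_inv_INR_diff (x c : R) (j : nat) :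
  0 <= x -> INR (j + 2) * x <= c ->
  x ^ 2 <= c ^ 2 * (/ INR (j + 1) - / INR (j + 2)).
Proof.
  intros Hx Hc.
  replace (INR (j + 2)) with (INR (j + 1) + 1) in *
    by (rewrite !plus_INR; simpl; ring).
  assert (Hu : 1 <= INR (j + 1)) by (rewrite plus_INR; simpl; pose proof (pos_INR j); lra).
  set (u := INR (j + 1)) in *.
  replace (/ u - / (u + 1)) with (/ (u * (u + 1))) by (field; lra).
  assert (Hsq : (x * (u + 1)) ^ 2 <= c ^ 2) by (apply pow_incr; nra).
  apply (Rmult_le_reg_r (u * (u + 1))); [nra|].
  rewrite Rmult_assoc, Rinv_l by nra.
  simpl in *; nra.
Qed.

Lemma Series_pow_le (x y : nat -> R) (q : R) (N : nat) :
  (forall j, 0 <= x j <= q) -> (forall j, x j ^ 2 <= y j) -> ex_series y ->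
  (2 <= N)%nat ->
  ex_series (fun j => x j ^ N) /\
  Series (fun j => x j ^ N) <= q ^ (N - 2) * Series y.
Proof.
  intros Hx Hxy Hy HN.
  assert (Hdom : forall j, 0 <= x j ^ N <= q ^ (N - 2) * y j).
  { intro j; split; [apply pow_le, Hx|].
    replace N with (N - 2 + 2)%nat at 1 by lia; rewrite pow_add.
    apply Rmult_le_compat; [apply pow_le, Hx | apply pow_le, Hx | |apply Hxy].
    apply pow_incr, Hx. }
  assert (Hey : ex_series (fun j => q ^ (N - 2) * y j)) by exact (ex_series_scal_l (q ^ (N - 2)) y Hy).
  split; [exact (ex_series_le_nonneg _ _ Hdom Hey)|].
  rewrite <- Series_scal_l; exact (Series_le _ _ Hdom Hey).
Qed.

Lemma Series_pow_bigO (x : nat -> R) (q c : R) :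
  (forall j, 0 <= x j <= q) -> (forall j, INR (j + 2) * x j <= c) ->
  exists C, forall N, (2 <= N)%nat ->
    ex_series (fun j => x j ^ N) /\ Series (fun j => x j ^ N) <= C * q ^ N.
Proof.
  intros Hx Hdecay.
  set (y := fun j : nat => c ^ 2 * (/ INR (j + 1) - / INR (j + 2))).
  assert (Hxy : forall j, x j ^ 2 <= y j)
    by (intro j; apply sq_le_inv_INR_diff; [apply Hx | apply Hdecay]).
  assert (Hey : ex_series y) by exact (ex_series_scal_l (c ^ 2) _ ex_series_inv_INR_diff).
  exists (Series y / q ^ 2); intros N HN.
  destruct (Series_pow_le x y q N Hx Hxy Hey HN) as [HeN HleN].
  split; [exact HeN|].
  assert (Hq : 0 <= q) by (destruct (Hx O); lra).
  destruct Hq as [Hq | Hq].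
  - replace (q ^ N) with (q ^ (N - 2) * q ^ 2) by (rewrite <- pow_add; f_equal; lia).
    replace (Series y / q ^ 2 * (q ^ (N - 2) * q ^ 2)) with (q ^ (N - 2) * Series y)
      by (field; lra).
    exact HleN.
  - (* q = 0 makes C = 0 (division by zero), but then every x_j vanishes. *)
    subst q; rewrite (pow_i N), Rmult_0_r, <- Series_zero by lia.
    right; apply Series_ext; intro j.
    rewrite (Rle_antisym _ _ (proj2 (Hx j)) (proj1 (Hx j))); apply pow_i; lia.
Qed.

Definition tail (a : nat -> R) (i : nat) : R := Series (fun m => a (i + m)%nat).

Lemma tail_S (a : nat -> R) (i : nat) :
  ex_series a -> tail a i = a i + tail a (S i).
Proof.
  intro Hea; unfold tail.
  rewrite Series_incr_1 by now apply ex_series_incr_n.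
  rewrite Nat.add_0_r; f_equal.
  apply Series_ext; intro m; f_equal; lia.
Qed.

Lemma tail_ge0 (a : nat -> R) (i : nat) :
  (forall n, 0 <= a n) -> ex_series a -> 0 <= tail a i.
Proof.
  intros Ha Hea; apply Series_ge0; [intro; apply Ha | now apply ex_series_incr_n].
Qed.

Lemma tail_le (a : nat -> R) (i j : nat) :
  (forall n, 0 <= a n) -> ex_series a -> (i <= j)%nat -> tail a j <= tail a i.
Proof.
  intros Ha Hea Hij; induction Hij as [|j Hij IH]; [lra|].
  rewrite (tail_S a j Hea) in IH; specialize (Ha j); lra.
Qed.

Lemma tail_markov (a : nat -> R) (i : nat) :
  (forall n, 0 <= a n) -> ex_series (fun m => INR m * a m) ->
  INR i * tail a i <= Series (fun m => INR m * a m).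
Proof.
  intros Ha Heb.
  set (b := fun m => INR m * a m).
  assert (Hb : forall n, 0 <= b n) by (intro n; apply Rmult_le_pos; [apply pos_INR | apply Ha]).
  unfold tail; rewrite <- Series_scal_l.
  apply Rle_trans with (tail b i); [|exact (tail_le b 0 i Hb Heb (Nat.le_0_l i))].
  apply Series_le; [|now apply ex_series_incr_n].
  intro m; unfold b; rewrite plus_INR.
  pose proof (Ha (i + m)%nat); pose proof (pos_INR i); pose proof (pos_INR m).
  split; nra.
Qed.

(* m <= |k - m| + |k| turns the moment hypothesis into a bound on the mean of m. *)
Lemma ex_series_first_moment (k : Z) (a : nat -> R) :
  (forall n, 0 <= a n) -> ex_series a ->
  ex_series (fun m => Rabs (IZR (k - Z.of_nat m)) * a m) ->
  ex_series (fun m => INR m * a m).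
Proof.
  intros Ha Hea Hmom.
  apply (ex_series_le_nonneg _ (fun m => Rabs (IZR (k - Z.of_nat m)) * a m + a m * Rabs (IZR k))).
  - intro m; pose proof (Ha m); pose proof (pos_INR m).
    assert (Hm : INR m <= Rabs (IZR (k - Z.of_nat m)) + Rabs (IZR k)).
    { rewrite INR_IZR_INZ, minus_IZR.
      pose proof (Rabs_triang_inv (IZR (Z.of_nat m)) (IZR k)) as Htri.
      rewrite Rabs_minus_sym in Htri; pose proof (Rle_abs (IZR (Z.of_nat m))); lra. }
    split; nra.
  - exact (ex_series_plus _ _ Hmom (ex_series_scal_r _ _ Hea)).
Qed.

Lemma tail_ratio_pow_bigO (a : nat -> R) :
  (forall n, 0 <= a n) -> ex_series a -> ex_series (fun m => INR m * a m) ->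
  0 < tail a 1 ->
  exists C, forall N, (2 <= N)%nat ->
    ex_series (fun j => (tail a (j + 2) / tail a 1) ^ N) /\
    Series (fun j => (tail a (j + 2) / tail a 1) ^ N) <= C * (tail a 2 / tail a 1) ^ N.
Proof.
  intros Ha Hea Hmean Hr1.
  apply Series_pow_bigO with (c := Series (fun m => INR m * a m) / tail a 1).
  - intro j; unfold Rdiv; split.
    + apply Rmult_le_pos; [apply tail_ge0 | left; apply Rinv_0_lt_compat]; auto.
    + apply Rmult_le_compat_r; [left; apply Rinv_0_lt_compat; exact Hr1|].
      apply tail_le; auto; lia.
  - intro j; unfold Rdiv; rewrite <- Rmult_assoc.
    apply Rmult_le_compat_r; [left; apply Rinv_0_lt_compat; exact Hr1|].
    exact (tail_markov a (j + 2) Ha Hmean).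
Qed.

Lemma r_eq_tail (p : Z -> R) (k : Z) (i : nat) :
  r p k i = tail (fun m => p (k - Z.of_nat m)%Z) i.
Proof. apply Series_ext; intro m; f_equal; lia. Qed.

Theorem lemma6p3 (k : Z) (p : Z -> R)
  (Hnonneg : forall l : Z, (l <= k)%Z -> 0 <= p l)
  (Hsum : is_series (fun m : nat => p (k - Z.of_nat m)%Z) 1)
  (Hpk : 0 < p k < 1)
  (Hpk1 : p k * p (k - 1)%Z > 0)
  (Hmoment : ex_series (fun m : nat => Rabs (IZR (k - Z.of_nat m)) * p (k - Z.of_nat m)%Z)) :
  exists C : R, exists N0 : nat, forall N : nat, (N0 <= N)%nat ->
    ex_series (fun i : nat => (r p k (i + 2) / r p k 1) ^ N) /\
    Rabs (Series (fun i : nat => (r p k (i + 2) / r p k 1) ^ N))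
      <= C * Rabs ((r p k 2 / r p k 1) ^ N).
Proof.
  set (a := fun m : nat => p (k - Z.of_nat m)%Z).
  assert (Ha : forall m, 0 <= a m) by (intro m; apply Hnonneg; lia).
  assert (Hea : ex_series a) by (exists 1; exact Hsum).
  pose proof (ex_series_first_moment k a Ha Hea Hmoment) as Hmean.
  pose proof (r_eq_tail p k) as Hr; fold a in Hr.
  assert (Hr1 : 0 < tail a 1).
  { assert (0 < a 1%nat) by (destruct Hpk; change (0 < p (k - 1)%Z); nra).
    rewrite (tail_S a 1 Hea); pose proof (tail_ge0 a 2 Ha Hea); lra. }
  destruct (tail_ratio_pow_bigO a Ha Hea Hmean Hr1) as [C HC].
  exists C, 2%nat; intros N HN.
  destruct (HC N HN) as [HeN HleN].
  assert (Hterm : forall i, (r p k (i + 2) / r p k 1) ^ N = (tail a (i + 2) / tail a 1) ^ N)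
    by (intro i; now rewrite !Hr).
  split; [exact (ex_series_ext _ _ (fun i => eq_sym (Hterm i)) HeN)|].
  assert (Hratio : forall i, 0 <= tail a i / tail a 1)
    by (intro i; apply Rdiv_le_0_compat; [apply tail_ge0 |]; auto).
  rewrite (Series_ext _ _ Hterm), !Hr, !Rabs_pos_eq; [exact HleN | apply pow_le, Hratio |].
  apply Series_ge0; [intro j; apply pow_le, Hratio | exact HeN].
Qed.
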